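(* Let $G=(V,E)$ be a graph and let $S$ be an optimal edge-irregulator of $G$. Then for every edge $e\in S$ there exists an edge $uv\in E$ with $d_G(u)=d_G(v)$ such that $e$ is at distance at most $2|S|-1$ from $uv$.
   Context: All graphs are finite and simple; $d_G(x)$ is the degree of $x$ in $G$. A graph is locally irregular if no two adjacent vertices have the same degree. An edge-irregulator of $G$ is a set $S\subseteq E(G)$ such that $G-S$ is locally irregular; it is optimal if it has minimum cardinality among all edge-irregulators of $G$. The distance between two edges is the minimum distance in $G$ between an endpoint of one and an endpoint of the other. *)

(* A finite simple graph on vertex type T is given by its
   edge set E : {set {set T}}, every edge being a 2-element vertex set. *)
From mathcomp Require Import all_boot.
Set Implicit Arguments. Unset Strict Implicit. Unset Printing Implicit Defensive.

Section Graphs.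
Variable T : finType.

Definition simple_graph (E : {set {set T}}) : Prop :=
  forall e, e \in E -> #|e| = 2.

Definition deg (E : {set {set T}}) (x : T) : nat := #|[set e in E | x \in e]|.

Definition adj (E : {set {set T}}) : rel T :=
  fun x y => (x != y) && ([set x; y] \in E).

Definition locally_irregular (E : {set {set T}}) : Prop :=
  forall u v, adj E u v -> deg E u != deg E v.

Definition edge_irregulator (E S : {set {set T}}) : Prop :=
  S \subset E /\ locally_irregular (E :\: S).

Definition optimal_edge_irregulator (E S : {set {set T}}) : Prop :=
  edge_irregulator E S /\ forall S', edge_irregulator E S' -> #|S| <= #|S'|.

Definition dist_le (E : {set {set T}}) (k : nat) (x y : T) : Prop :=
  exists p : seq T, [&& path (adj E) x p, last x p == y & size p <= k].

Definition edge_dist_le (E : {set {set T}}) (k : nat) (e f : {set T}) : Prop :=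
  exists x y, [/\ x \in e, y \in f & dist_le E k x y].

End Graphs.

(* Grow a ball around e in steps of two, counting the edges of S it meets.
   These counts cannot increase |S| times in a row, so for some k < |S| the
   edges of S within distance 2k of e are also all those within distance
   2k + 2; call them X.  Since |S \ X| < |S|, optimality gives a conflict in
   G - (S \ X), an edge uv with d(u) = d(v).  Such a conflict must touch an
   edge of X, for otherwise it would already be a conflict in G - S.  Say u
   lies on an edge of X: then u and v are within distance 2k + 2 of e, so
   every edge of S at u or v lies in X, and the degrees of u and v in
   G - (S \ X) are their degrees in G. *)

From mathcomp Require Import all_boot zify.
Set Implicit Arguments. Unset Strict Implicit. Unset Printing Implicit Defensive.

Section Walks.
Variables (T : finType) (E : {set {set T}}).

Definition dist_leb (k : nat) (x y : T) : bool :=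
  [exists n : 'I_k.+1, exists p : n.-tuple T, path (adj E) x p && (last x p == y)].

Lemma dist_leP k x y : reflect (dist_le E k x y) (dist_leb k x y).
Proof.
apply: (iffP existsP) => [[n /existsP [p /andP [walk_p last_p]]] | [p]].
  by exists p; rewrite walk_p last_p size_tuple -ltnS ltn_ord.
case/and3P=> walk_p last_p size_p; exists (Ordinal (size_p : size p < k.+1)).
by apply/existsP; exists (in_tuple p); rewrite walk_p last_p.
Qed.

Lemma dist_le_refl x : dist_le E 0 x x.
Proof. by exists [::]; rewrite /= eqxx. Qed.

Lemma dist_le_mono m n x y : m <= n -> dist_le E m x y -> dist_le E n x y.
Proof.
move=> le_mn [p /and3P [walk_p last_p size_p]]; exists p.
by rewrite walk_p last_p (leq_trans size_p le_mn).
Qed.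

Lemma dist_le_rcons n x a b : dist_le E n x a -> adj E a b -> dist_le E n.+1 x b.
Proof.
move=> [p /and3P [walk_p /eqP last_p size_p]] adj_ab; exists (rcons p b).
by rewrite rcons_path walk_p last_p adj_ab last_rcons eqxx size_rcons ltnS.
Qed.

Lemma edge_dist_le_mono m n e f :
  m <= n -> edge_dist_le E m e f -> edge_dist_le E n e f.
Proof.
move=> le_mn [x [y [xe yf dxy]]]; exists x, y.
by split=> //; apply: dist_le_mono dxy.
Qed.

Lemma adj_sym : symmetric (adj E).
Proof. by move=> u v; rewrite /adj eq_sym setUC. Qed.

Lemma adj_of_edge f y a :
  simple_graph E -> f \in E -> y \in f -> a \in f -> y != a -> adj E y a.
Proof.
move=> simpleE fE yf af neq_ya; rewrite /adj neq_ya.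
suff -> : [set y; a] = f by [].
apply/eqP; rewrite eqEcard (simpleE _ fE) cards2 neq_ya andbT.
by apply/subsetP => z; rewrite !inE => /orP [] /eqP ->.
Qed.

End Walks.

Lemma eq_deg (T : finType) (A B : {set {set T}}) u :
  (forall g : {set T}, u \in g -> (g \in A) = (g \in B)) -> deg A u = deg B u.
Proof.
move=> eqAB; apply: eq_card => g; rewrite !inE.
by case ug: (u \in g); rewrite ?andbT ?andbF ?eqAB.
Qed.

Lemma not_locally_irregular (T : finType) (A : {set {set T}}) :
  ~ locally_irregular A -> exists u v, adj A u v /\ deg A u = deg A v.
Proof.
move=> not_irr.
have [/existsP [u /existsP [v /andP [adj_uv /eqP eq_uv]]] | no_conflict] :=
  boolP [exists u, exists v, adj A u v && (deg A u == deg A v)].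
  by exists u, v.
case: not_irr => u v adj_uv; apply: contra no_conflict => eq_uv.
by apply/existsP; exists u; apply/existsP; exists v; rewrite adj_uv.
Qed.

Lemma conflict_touches (T : finType) (E S X : {set {set T}}) u v :
  locally_irregular (E :\: S) ->
  adj (E :\: (S :\: X)) u v -> deg (E :\: (S :\: X)) u = deg (E :\: (S :\: X)) v ->
  exists2 f, f \in X & (u \in f) || (v \in f).
Proof.
move=> irrS adj_uv eq_uv.
have [/exists_inP [f fX uvf] | /exists_inP untouched] :=
  boolP [exists f in X, (u \in f) || (v \in f)]; first by exists f.
have same_deg w : w \in [set u; v] -> deg (E :\: (S :\: X)) w = deg (E :\: S) w.
  move=> wuv; apply: eq_deg => g wg; rewrite !in_setD.
  case gX: (g \in X) => //; case: untouched; exists g => //.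
  by case/set2P: wuv wg => -> ->; rewrite ?orbT.
have adj_S : adj (E :\: S) u v.
  move: adj_uv; rewrite /adj !in_setD negb_and negbK => /andP [-> /andP [+ ->]].
  case/orP=> [uvX | -> //]; case: untouched; exists [set u; v] => //.
  by rewrite set21.
by move: (irrS u v adj_S); rewrite -!same_deg ?set21 ?set22 // eq_uv eqxx.
Qed.

Lemma chain_stabilizes (aT : finType) (A : {set aT}) (D : nat -> {set aT}) :
  (forall n, D n \subset D n.+1) -> (forall n, D n \subset A) -> D 0 != set0 ->
  exists2 k, k < #|A| & D k.+1 \subset D k.
Proof.
move=> incD subA D0.
have [/existsP [k stable] | /existsP no_stable] :=
  boolP [exists k : 'I_#|A|, D k.+1 \subset D k]; first by exists k.
have grows n : n <= #|A| -> n < #|D n|.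
  elim: n => [|n IHn] le_nA; first by rewrite card_gt0.
  apply: leq_ltn_trans (IHn (ltnW le_nA)) (proper_card _).
  rewrite properE incD; apply/negP => stable.
  by case: no_stable; exists (Ordinal le_nA).
by move: (grows _ (leqnn _)); rewrite ltnNge subset_leq_card.
Qed.

Section NearEdges.
Variables (T : finType) (E S : {set {set T}}) (e : {set T}).

Definition near_edges (j : nat) : {set {set T}} :=
  [set f in S | [exists x in e, exists y in f, dist_leb E j x y]].

Lemma near_edgesP j f :
  reflect (f \in S /\ edge_dist_le E j e f) (f \in near_edges j).
Proof.
rewrite inE; apply: (iffP andP) => [[fS /exists_inP [x xe /exists_inP [y yf]]] | ].
  by move/dist_leP=> dxy; split=> //; exists x, y.
case=> fS [x [y [xe yf /dist_leP dxy]]]; split=> //.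
by apply/exists_inP; exists x => //; apply/exists_inP; exists y.
Qed.

Lemma mem_near_edges j f x y :
  f \in S -> x \in e -> y \in f -> dist_le E j x y -> f \in near_edges j.
Proof. by move=> fS xe yf dxy; apply/near_edgesP; split=> //; exists x, y. Qed.

Lemma near_edges_sub j : near_edges j \subset S.
Proof. by apply/subsetP => f /near_edgesP []. Qed.

Lemma near_edges_mono m n : m <= n -> near_edges m \subset near_edges n.
Proof.
move=> le_mn; apply/subsetP => f /near_edgesP [fS near_f].
by apply/near_edgesP; split=> //; apply: edge_dist_le_mono near_f.
Qed.

Hypotheses (simpleE : simple_graph E) (SE : S \subset E).

Lemma near_edges_vertex j f a :
  f \in near_edges j -> a \in f -> exists2 x, x \in e & dist_le E j.+1 x a.
Proof.
case/near_edgesP=> fS [x [y [xe yf dxy]]] af; exists x => //.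
have [<- | neq_ya] := eqVneq y a; first exact: dist_le_mono dxy.
by apply: dist_le_rcons dxy (adj_of_edge simpleE (subsetP SE _ fS) yf af neq_ya).
Qed.

Lemma self_near_edges j : e \in S -> e \in near_edges j.
Proof.
move=> eS; have [x xe] : exists x, x \in e.
  by apply/set0Pn; rewrite -card_gt0 (simpleE (subsetP SE _ eS)).
exact: (mem_near_edges eS xe xe (dist_le_mono (leq0n j) (dist_le_refl E x))).
Qed.

Lemma near_edges_stable :
  e \in S -> exists2 k, k < #|S| & near_edges (2 * k).+2 \subset near_edges (2 * k).
Proof.
move=> eS.
have incD n : near_edges (2 * n) \subset near_edges (2 * n.+1).
  by apply: near_edges_mono; lia.
have D0 : near_edges (2 * 0) != set0.
  by apply/set0Pn; exists e; apply: self_near_edges.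
have [k ltkS stable] := chain_stabilizes incD (fun n => near_edges_sub _) D0.
by exists k; rewrite // -addn2 -mulnSr.
Qed.

Variable r : nat.
Hypothesis stable : near_edges r.+2 \subset near_edges r.
Local Notation X := (near_edges r).

Lemma conflict_near u v f :
  f \in X -> u \in f ->
  adj (E :\: (S :\: X)) u v -> deg (E :\: (S :\: X)) u = deg (E :\: (S :\: X)) v ->
  [/\ u != v, [set u; v] \in E, deg E u = deg E v &
      edge_dist_le E r.+1 e [set u; v]].
Proof.
move=> fX uf /andP [neq_uv]; rewrite in_setD => /andP [_ uvE] eq_uv.
have adj_uv : adj E u v by rewrite /adj neq_uv.
have [x xe dxu] := near_edges_vertex fX uf.
have full_deg w : dist_le E r.+2 x w -> deg (E :\: (S :\: X)) w = deg E w.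
  move=> dxw; apply: eq_deg => g wg; rewrite !in_setD.
  case gS: (g \in S); last by rewrite andbF.
  by rewrite (subsetP stable _ (mem_near_edges gS xe wg dxw)).
have dxv : dist_le E r.+2 x v by apply: dist_le_rcons dxu adj_uv.
have dxu' : dist_le E r.+2 x u by apply: dist_le_mono dxu.
split=> //; first by rewrite -(full_deg u dxu') -(full_deg v dxv).
by exists x, u; rewrite !inE eqxx.
Qed.

End NearEdges.

Theorem lemma1 (T : finType) (E S : {set {set T}}) :
  simple_graph E ->
  optimal_edge_irregulator E S ->
  forall e, e \in S ->
    exists u v : T,
      [/\ u != v, [set u; v] \in E, deg E u = deg E v &
          edge_dist_le E (2 * #|S| - 1) e [set u; v]].
Proof.
move=> simpleE [[SE irrS] optS] e eS.
have [k ltkS stable] := near_edges_stable simpleE SE eS.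
set X := near_edges E S e (2 * k).
have ltS : #|S :\: X| < #|S|.
  rewrite proper_card // properE subsetDl; apply/subsetPn; exists e => //.
  by rewrite in_setD self_near_edges.
have [u [v [adj_uv eq_uv]]] : exists u v, adj (E :\: (S :\: X)) u v /\
    deg (E :\: (S :\: X)) u = deg (E :\: (S :\: X)) v.
  apply: not_locally_irregular => irrSX.
  have := optS _ (conj (subset_trans (subsetDl S X) SE) irrSX).
  by rewrite leqNgt ltS.
have le_dist : (2 * k).+1 <= 2 * #|S| - 1 by lia.
have [f fX /orP [uf | vf]] := conflict_touches irrS adj_uv eq_uv.
- have [neq_uv uvE eq_deg near_uv] :=
    conflict_near simpleE SE stable fX uf adj_uv eq_uv.
  by exists u, v; split=> //; apply: edge_dist_le_mono near_uv.
- rewrite adj_sym in adj_uv.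
  have [neq_vu vuE eq_deg near_vu] :=
    conflict_near simpleE SE stable fX vf adj_uv (esym eq_uv).
  by exists v, u; split=> //; apply: edge_dist_le_mono near_vu.
Qed.
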